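(* Let $X$ be the class of continuous functions $f:[0,1]\to\mathbb{R}$ with $f(0),f(1)\in\mathbb{Z}$. Then each of the two families of operators $\widetilde{B}_n$, $n\in\mathbb{N}_+$, and $\widehat{B}_n$, $n\in\mathbb{N}_+$, uniformly asymptotically preserves monotonicity on $X$.
   Context: For $n\in\mathbb{N}_+$ and $f:[0,1]\to\mathbb{R}$, define $\widetilde{B}_n(f)(x):=\sum_{k=0}^n \left[f\left(\frac{k}{n}\right)\binom{n}{k}\right]x^k(1-x)^{n-k}$, where $[\alpha]$ is the largest integer $\le\alpha$, and $\widehat{B}_n(f)(x):=\sum_{k=0}^n \left\langle f\left(\frac{k}{n}\right)\binom{n}{k}\right\rangle x^k(1-x)^{n-k}$, where $\langle\alpha\rangle$ is the integer nearest to $\alpha$ (when $\alpha$ is a half-integer, $\langle\alpha\rangle$ may be either of the two neighbouring integers, chosen arbitrarily; the result holds for any such choice). Definition: a family of operators $L_n:X\to X$, $n\in\mathbb{N}_+$, on a class $X$ of functions defined on $I\subseteq\mathbb{R}$ uniformly asymptotically preserves monotonicity on $X$ if there exist $n_0\in\mathbb{N}_+$ and functions $\varepsilon_n,\eta_n:I\to\mathbb{R}$, $n\ge n_0$, such that: (i) $\varepsilon_n\to 0$ and $\eta_n\to 0$ uniformly on $I$ as $n\to\infty$; (ii) whenever $f\in X$ is monotone increasing on $I$, $L_n(f)+\varepsilon_n$ is monotone increasing on $I$ for all $n\ge n_0$; (iii) whenever $f\in X$ is monotone decreasing on $I$, $L_n(f)+\eta_n$ is monotone decreasing on $I$ for all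 $n\ge n_0$. Monotone increasing/decreasing are meant in the non-strict sense. *)

From HB Require Import structures.
From mathcomp Require Import all_boot all_order all_algebra.
From mathcomp Require Import all_classical all_reals all_analysis.
Set Implicit Arguments. Unset Strict Implicit. Unset Printing Implicit Defensive.
Import Order.TTheory GRing.Theory Num.Theory.
Import numFieldNormedType.Exports.
Local Open Scope classical_set_scope.
Local Open Scope ring_scope.

Definition Btilde (R : realType) (n : nat) (f : R -> R) (x : R) : R :=
  \sum_(k < n.+1)
    ((Num.floor (f (k%:R / n%:R) * ('C(n, k))%:R))%:~R * x ^+ k * (1 - x) ^+ (n - k)).

Definition Bhat (R : realType) (rnd : R -> int) (n : nat) (f : R -> R) (x : R) : R :=
  \sum_(k < n.+1)
    ((rnd (f (k%:R / n%:R) * ('C(n, k))%:R))%:~R * x ^+ k * (1 - x) ^+ (n - k)).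

(* rnd a is an integer nearest to a (either neighbour at half-integers) *)
Definition nearest_int (R : realType) (rnd : R -> int) : Prop :=
  forall a : R, `|a - (rnd a)%:~R| <= 2^-1.

Definition in_X (R : realType) (f : R -> R) : Prop :=
  {within `[(0:R), 1], continuous f} /\
  (exists z : int, f 0 = z%:~R) /\ (exists z : int, f 1 = z%:~R).

Definition incr_on01 (R : realType) (g : R -> R) : Prop :=
  forall x y : R, 0 <= x -> x <= y -> y <= 1 -> g x <= g y.

Definition decr_on01 (R : realType) (g : R -> R) : Prop :=
  forall x y : R, 0 <= x -> x <= y -> y <= 1 -> g y <= g x.

Definition unif_to0_on01 (R : realType) (e : nat -> R -> R) : Prop :=
  forall eps : R, 0 < eps -> exists N : nat, forall n : nat, (N <= n)%N ->
    forall x : R, 0 <= x -> x <= 1 -> `|e n x| < eps.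

Definition unif_asymp_pres_mono (R : realType)
    (L : nat -> (R -> R) -> R -> R) : Prop :=
  exists n0 : nat, (0 < n0)%N /\
  exists eps eta : nat -> R -> R,
    unif_to0_on01 eps /\ unif_to0_on01 eta /\
    (forall f, in_X f -> incr_on01 f ->
       forall n, (n0 <= n)%N -> incr_on01 (fun x => L n f x + eps n x)) /\
    (forall f, in_X f -> decr_on01 f ->
       forall n, (n0 <= n)%N -> decr_on01 (fun x => L n f x + eta n x)).

(* Write the operator with an integer rounding r as a Bernstein sum with
   coefficients c_k = r(f(k/n) C(n,k)) / C(n,k).  When r is within 1 of its
   argument and exact on integers, |c_k - f(k/n)| <= d_k, where
   d_k = 1/C(n,k) for 0 < k < n and d_0 = d_n = 0 because f(0), f(1) are
   integers.  Shifting the coefficients by e_k = sum_(j<k) (d_j + d_(j+1))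
   makes them nondecreasing whenever f is, and a Bernstein sum with
   nondecreasing coefficients is nondecreasing on [0,1].  The correction
   B_n(e) lies in [0, 2 sum_k d_k], and sum_k d_k <= 6/n since C(n,k) >= n
   for 0 < k < n and C(n,k) >= C(n,2) for 2 <= k <= n-2.  Decreasing f are
   handled through -f. *)

From mathcomp Require Import all_boot all_order all_algebra.
From mathcomp Require Import all_classical all_reals all_analysis.
From mathcomp Require Import ring lra zify.
Import Order.TTheory GRing.Theory Num.Theory.
Local Open Scope ring_scope.

Section Bernstein.
Variable R : realDomainType.
Implicit Types (b : nat -> R) (x : R).

Definition bernstein b n x : R :=
  \sum_(k < n.+1) b k * ('C(n, k))%:R * x ^+ k * (1 - x) ^+ (n - k).

Lemma bernsteinD b1 b2 n x :
  bernstein (fun k => b1 k + b2 k) n x = bernstein b1 n x + bernstein b2 n x.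
Proof. by rewrite /bernstein -big_split /=; apply: eq_bigr => k _; ring. Qed.

Lemma bernsteinN b n x : bernstein (fun k => - b k) n x = - bernstein b n x.
Proof. by rewrite /bernstein -sumrN; apply: eq_bigr => k _; ring. Qed.

Lemma bernstein_cst c n x : bernstein (fun _ => c) n x = c.
Proof.
transitivity (c * ((1 - x) + x) ^+ n); last by rewrite subrK expr1n mulr1.
by rewrite exprDn mulr_sumr; apply: eq_bigr => k _; rewrite -mulr_natr; ring.
Qed.

Lemma bernsteinS b n x :
  bernstein b n.+1 x = (1 - x) * bernstein b n x + x * bernstein (b \o succn) n x.
Proof.
rewrite /bernstein big_ord_recl /= bin0 subn0.
(* Pascal's rule splits every term of the sum of order n.+1 in two. *)
have -> : \sum_(i < n.+1) b (bump 0 i) * ('C(n.+1, bump 0 i))%:R * x ^+ bump 0 i *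
      (1 - x) ^+ (n.+1 - bump 0 i) =
   \sum_(i < n.+1) b i.+1 * ('C(n, i.+1))%:R * x ^+ i.+1 * (1 - x) ^+ (n - i) +
   \sum_(i < n.+1) b i.+1 * ('C(n, i))%:R * x ^+ i.+1 * (1 - x) ^+ (n - i).
  by rewrite -big_split /=; apply: eq_bigr => i _; rewrite /bump add1n binS subSS natrD; ring.
rewrite !mulr_sumr [in RHS]big_ord_recl /= bin0 subn0.
rewrite big_ord_recr /= bin_small // mulr0 !mul0r addr0 -addrA.
congr (_ + _); first by rewrite !expr0 !mulr1 exprS; ring.
congr (_ + _); apply: eq_bigr => i _; last by rewrite /bump exprS; ring.
by rewrite /bump add1n -[(n - i)%N]subSS (@subSn i.+1 n) // [(1 - x) ^+ _.+1]exprS; ring.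
Qed.

Lemma bernstein_ge0 b n x : (forall k, (k <= n)%N -> 0 <= b k) ->
  0 <= x -> x <= 1 -> 0 <= bernstein b n x.
Proof.
move=> b_ge0 x_ge0 x_le1; apply: sumr_ge0 => k _.
by rewrite !mulr_ge0 ?ler0n ?exprn_ge0 ?subr_ge0 // b_ge0 // -ltnS.
Qed.

Lemma bernstein_le_cst b n x c : (forall k, (k <= n)%N -> b k <= c) ->
  0 <= x -> x <= 1 -> bernstein b n x <= c.
Proof.
move=> b_le x_ge0 x_le1; rewrite -subr_ge0 -[X in X - _](bernstein_cst c n x).
rewrite -bernsteinN -bernsteinD; apply: bernstein_ge0 => // k kn.
by rewrite subr_ge0 b_le.
Qed.

Lemma bernstein_homo n b : (forall k, (k < n)%N -> b k <= b k.+1) ->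
  forall x y, 0 <= x -> x <= y -> y <= 1 -> bernstein b n x <= bernstein b n y.
Proof.
elim: n b => [|n IH] b b_nondecr x y x_ge0 le_xy y_le1.
  by rewrite /bernstein !big_ord1.
set B := bernstein b n; set B' := bernstein (b \o succn) n.
have incrB : B x <= B y by apply: IH => // k kn; rewrite b_nondecr // ltnW.
have incrB' : B' x <= B' y by apply: IH => // k kn; rewrite b_nondecr.
have le_BB' : B x <= B' x.
  rewrite -subr_ge0 -bernsteinN -bernsteinD; apply: bernstein_ge0 => //; last lra.
  by move=> k kn; rewrite subr_ge0 b_nondecr.
rewrite -subr_ge0.
have -> : bernstein b n.+1 y - bernstein b n.+1 x =
    (1 - y) * (B y - B x) + y * (B' y - B' x) + (y - x) * (B' x - B x).
  by rewrite !bernsteinS -/B -/B'; ring.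
by rewrite !addr_ge0 ?mulr_ge0 ?subr_ge0 // (le_trans x_ge0).
Qed.

End Bernstein.
Arguments bernstein {R}.

Lemma leq_binS n m : (m + m < n)%N -> ('C(n, m) <= 'C(n, m.+1))%N.
Proof.
move=> lt_mn; rewrite -(leq_pmul2l (ltn0Sn m)) mul_bin_left.
by apply: leq_mul => //; lia.
Qed.

Lemma leq_bin_inner n k j : (k <= j)%N -> (j + k <= n)%N -> ('C(n, k) <= 'C(n, j))%N.
Proof.
wlog le_jn : j / (j + j <= n)%N => [hwlog le_kj le_jkn|].
  have [le_jjn|lt_njj] := leqP (j + j) n; first exact: hwlog.
  by rewrite -[X in (_ <= X)%N]bin_sub; [apply: hwlog|]; lia.
elim: j le_jn => [|j IH] le_jn le_kj _; first by move: le_kj; rewrite leqn0 => /eqP->.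
move: le_kj; rewrite leq_eqVlt => /orP[/eqP-> // | lt_kj].
by apply: (@leq_trans 'C(n, j)); [apply: IH | apply: leq_binS]; lia.
Qed.

Section RoundingError.
Variable R : realFieldType.

Definition coef_err (n k : nat) : R := if (0 < k < n)%N then ('C(n, k)%:R)^-1 else 0.

Definition coef_shift (n k : nat) : R := \sum_(j < k) (coef_err n j + coef_err n j.+1).

Lemma coef_err_ge0 n k : 0 <= coef_err n k.
Proof. by rewrite /coef_err; case: ifP; rewrite ?invr_ge0 ?ler0n. Qed.

Lemma coef_err_le_inv n k : (0 < n)%N -> coef_err n k <= n%:R^-1.
Proof.
move=> n_gt0; rewrite /coef_err; case: ifP => [k_inner|_]; last by rewrite invr_ge0 ler0n.
rewrite lef_pV2 ?posrE ?ltr0n ?bin_gt0 ?ler_nat; try lia.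
by rewrite -{1}(bin1 n) leq_bin_inner //; lia.
Qed.

Lemma coef_err_le_bin2 n k : (1 < k)%N -> (k + 2 <= n)%N -> coef_err n k <= ('C(n, 2)%:R)^-1.
Proof.
move=> k_gt1 kn; rewrite /coef_err ifT; last by lia.
rewrite lef_pV2 ?posrE ?ltr0n ?bin_gt0 ?ler_nat; try lia.
by apply: leq_bin_inner; lia.
Qed.

Lemma sum_coef_err_le n : (3 <= n)%N -> \sum_(k < n.+1) coef_err n k <= 6 / n%:R.
Proof.
move=> n_ge3; have n_gt0 : (0 < n)%N by lia.
rewrite -(big_mkord xpredT) (@big_cat_nat _ _ _ 2) //=.
rewrite (@big_cat_nat _ _ _ (n - 1) 2) //=; try lia.
have ends i : coef_err n i + coef_err n i.+1 <= 2 / n%:R.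
  by have := coef_err_le_inv n i n_gt0; have := coef_err_le_inv n i.+1 n_gt0; lra.
have head : \sum_(0 <= i < 2) coef_err n i <= 2 / n%:R.
  by rewrite big_nat_recr //= big_nat1; apply: ends.
have tail : \sum_(n - 1 <= i < n.+1) coef_err n i <= 2 / n%:R.
  have -> : n.+1 = (n - 1).+2 by lia.
  by rewrite big_nat_recr // big_nat1; apply: ends.
have middle : \sum_(2 <= i < n - 1) coef_err n i <= 2 / n%:R.
  have C2 : (n * (n - 1) = 2 * 'C(n, 2))%N by rewrite -mul_bin_diag bin1 subn1.
  have inv_C2 : ('C(n, 2)%:R)^-1 = 2 / (n%:R * (n - 1)%:R) :> R.
    by rewrite -natrM C2 natrM invfM mulrA divff ?mul1r // pnatr_eq0.
  apply: le_trans (_ : \sum_(2 <= i < n - 1) 2 / (n%:R * (n - 1)%:R) <= _).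
    by apply: ler_sum_nat => i /andP[i_ge2 i_lt]; rewrite -inv_C2 coef_err_le_bin2 //; lia.
  have n_neq0 : n%:R != 0 :> R by rewrite pnatr_eq0 -lt0n.
  have n1_neq0 : (n - 1)%:R != 0 :> R by rewrite pnatr_eq0; lia.
  rewrite sumr_const_nat [X in _ <= X](_ : _ = 2 / (n%:R * (n - 1)%:R) *+ (n - 1)).
    by apply: ler_wpMn2l; [rewrite divr_ge0 ?mulr_ge0 ?ler0n | lia].
  by rewrite -[_ *+ (n - 1)]mulr_natr; field; rewrite n_neq0 n1_neq0.
lra.
Qed.

Lemma coef_shift_ge0 n k : 0 <= coef_shift n k.
Proof. by apply: sumr_ge0 => j _; rewrite addr_ge0 ?coef_err_ge0. Qed.

Lemma coef_shift_le n k : (k <= n)%N -> coef_shift n k <= 2 * \sum_(j < n.+1) coef_err n j.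
Proof.
move=> le_kn; have shift_homo : {homo coef_shift n : i j / (i <= j)%N >-> i <= j}.
  apply: Order.NatMonotonyTheory.nondecnP => j.
  by rewrite /coef_shift big_ord_recr lerDl addr_ge0 ?coef_err_ge0.
apply: le_trans (shift_homo _ _ le_kn) _.
rewrite /coef_shift big_split mulr_natl mulr2n /=.
apply: lerD.
  by rewrite [X in _ <= X]big_ord_recr /= lerDl coef_err_ge0.
by rewrite [X in _ <= X]big_ord_recl /= lerDr coef_err_ge0.
Qed.

Lemma bernstein_shift_homo n b (g : R -> R) : (0 < n)%N ->
  (forall x y, 0 <= x -> x <= y -> y <= 1 -> g x <= g y) ->
  (forall k, (k <= n)%N -> `|b k - g (k%:R / n%:R)| <= coef_err n k) ->
  forall x y, 0 <= x -> x <= y -> y <= 1 ->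
  bernstein (fun k => b k + coef_shift n k) n x <=
  bernstein (fun k => b k + coef_shift n k) n y.
Proof.
move=> n_gt0 g_homo b_near; apply: bernstein_homo => k lt_kn.
have n_pos : (0 : R) < n%:R by rewrite ltr0n.
have g_step : g (k%:R / n%:R) <= g (k.+1%:R / n%:R).
  apply: g_homo; first by rewrite divr_ge0 ?ler0n.
    by rewrite ler_pM2r ?invr_gt0 // ler_nat.
  by rewrite ler_pdivrMr // mul1r ler_nat.
move: (b_near k (ltnW lt_kn)) (b_near k.+1 lt_kn).
rewrite /coef_shift big_ord_recr /= !ler_norml => /andP[? ?] /andP[? ?].
lra.
Qed.

End RoundingError.

Lemma unif_to0_on01_inv (R : realType) (e : nat -> R -> R) (n0 : nat) (C : R) :
  (forall n, (n0 <= n)%N -> forall x, 0 <= x -> x <= 1 -> `|e n x| <= C / n%:R) ->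
  unif_to0_on01 e.
Proof.
move=> e_le eps eps_gt0; exists (maxn n0 (Num.truncn (C / eps)).+1) => n.
rewrite geq_max => /andP[le_n0n lt_Cn] x x_ge0 x_le1.
have n_pos : (0 : R) < n%:R by rewrite ltr0n; lia.
apply: le_lt_trans (e_le n le_n0n x x_ge0 x_le1) _.
rewrite ltr_pdivrMr // mulrC -ltr_pdivrMr //.
by apply: lt_le_trans (truncnS_gt _) _; rewrite ler_nat.
Qed.

Section RoundedBernstein.
Variables (R : realType) (r : R -> int).
Hypothesis r_dist : forall a : R, `|a - (r a)%:~R| <= 1.
Hypothesis r_intr : forall z : int, r z%:~R = z.

Definition round_coef n (f : R -> R) k : R :=
  (r (f (k%:R / n%:R) * ('C(n, k))%:R))%:~R / ('C(n, k))%:R.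

Lemma Bhat_bernstein n f x : Bhat r n f x = bernstein (round_coef n f) n x.
Proof.
apply: eq_bigr => k _; rewrite /round_coef divfK // pnatr_eq0 -lt0n bin_gt0.
by rewrite -ltnS.
Qed.

Lemma round_coef_err n f k : (0 < n)%N -> (k <= n)%N ->
  (exists z : int, f 0 = z%:~R) -> (exists z : int, f 1 = z%:~R) ->
  `|round_coef n f k - f (k%:R / n%:R)| <= coef_err R n k.
Proof.
move=> n_gt0 le_kn [z0 f0] [z1 f1]; rewrite /coef_err /round_coef.
case: ifP => [k_inner | k_end].
  have C_pos : (0 : R) < ('C(n, k))%:R by rewrite ltr0n bin_gt0.
  set a := f (k%:R / n%:R); set C := ('C(n, k))%:R.
  have -> : (r (a * C))%:~R / C - a = ((r (a * C))%:~R - a * C) / C.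
    by field; apply: lt0r_neq0.
  rewrite normrM normfV (gtr0_norm C_pos) -[X in _ <= X]mul1r.
  by rewrite ler_wpM2r ?invr_ge0 ?ler0n // distrC r_dist.
have [-> | ->] : k = 0%N \/ k = n by lia.
  by rewrite mul0r f0 bin0 mulr1 r_intr divr1 subrr normr0.
by rewrite divff ?pnatr_eq0 -?lt0n // f1 binn mulr1 r_intr divr1 subrr normr0.
Qed.

Lemma Bhat_asymp_pres_mono : unif_asymp_pres_mono (Bhat r).
Proof.
pose eps n x := bernstein (coef_shift R n) n x.
have eps_small n : (3 <= n)%N -> forall x, 0 <= x -> x <= 1 -> `|eps n x| <= 12 / n%:R.
  move=> n_ge3 x x_ge0 x_le1.
  rewrite ger0_norm; last by apply: bernstein_ge0 => // k _; apply: coef_shift_ge0.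
  apply: bernstein_le_cst => // k le_kn.
  by have := coef_shift_le R n k le_kn; have := sum_coef_err_le R n n_ge3; lra.
exists 3%N; split=> //; exists eps, (fun n x => - eps n x).
split; [exact: unif_to0_on01_inv eps_small|split].
  by apply: (@unif_to0_on01_inv _ _ 3 12) => n n_ge3 x x_ge0 x_le1; rewrite normrN eps_small.
split=> f [_ [f0 f1]] f_mono n n_ge3 x y x_ge0 le_xy y_le1.
  rewrite /eps !Bhat_bernstein -!bernsteinD.
  apply: (bernstein_shift_homo _ _ _ f) => // [|k le_kn]; first by lia.
  by apply: round_coef_err => //; lia.
have near_opp k : (k <= n)%N ->
    `|- round_coef n f k - - f (k%:R / n%:R)| <= coef_err R n k.
  by move=> le_kn; rewrite -opprD normrN round_coef_err //; lia.
rewrite /eps !Bhat_bernstein -lerN2 !opprD !opprK -!bernsteinN -!bernsteinD.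
apply: (bernstein_shift_homo _ _ _ (fun x => - f x)) => //; first by lia.
by move=> u v u_ge0 le_uv v_le1; rewrite lerN2 f_mono.
Qed.

End RoundedBernstein.

Lemma dist_floor_le1 (R : realType) (a : R) : `|a - (Num.floor a)%:~R| <= 1.
Proof.
have /andP[floor_le lt_floor] := floor_itv a; rewrite intrD in lt_floor.
by rewrite ger0_norm ?subr_ge0 //; lra.
Qed.

Lemma nearest_int_intr (R : realType) (rnd : R -> int) :
  nearest_int rnd -> forall z : int, rnd z%:~R = z.
Proof.
move=> rnd_nearest z; apply/eqP; rewrite eq_sym -subr_eq0 -normr_le0 -ltzD1.
rewrite -(ltr_int R) intr_norm intrB; apply: le_lt_trans (rnd_nearest _) _.
by rewrite invf_lt1 ?ltr1n.
Qed.

Theorem theorem1p3 (R : realType) (rnd : R -> int) :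
  nearest_int rnd ->
  unif_asymp_pres_mono (@Btilde R) /\ unif_asymp_pres_mono (Bhat rnd).
Proof.
move=> rnd_nearest; split.
  (* [Btilde] unfolds to [Bhat Num.floor]. *)
  exact: Bhat_asymp_pres_mono (@dist_floor_le1 R) (@intrKfloor R).
apply: Bhat_asymp_pres_mono; last exact: nearest_int_intr.
by move=> a; apply: le_trans (rnd_nearest a) _; rewrite invf_le1 ?ler1n.
Qed.
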